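(* Let $n$ be a positive integer, and let $a\in\mathcal{T}_n$ with $\operatorname{rank}(a)=r$. Then the variant $\mathcal{T}_n^a$ embeds in $\mathcal{T}_{2n-r}$ (i.e., there is an injective semigroup homomorphism $\mathcal{T}_n^a\to\mathcal{T}_{2n-r}$).
   Context: For a positive integer $m$, $\mathcal{T}_m$ is the semigroup of all functions $\{1,\ldots,m\}\to\{1,\ldots,m\}$ under composition; $\operatorname{rank}(f)=|\operatorname{im}(f)|$. For a semigroup $S$ and $a\in S$, the variant $S^a$ is the set $S$ with operation $x\star_a y=xay$. *)

From mathcomp Require Import all_boot.
Set Implicit Arguments. Unset Strict Implicit. Unset Printing Implicit Defensive.

Definition Tn (m : nat) := {ffun 'I_m -> 'I_m}.

(* Product in T_m: composition, written left-to-right as is customary in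
   semigroup theory: (f * g)(x) = g (f x). *)
Definition tmul (m : nat) (f g : Tn m) : Tn m := [ffun x => g (f x)].

Definition trank (m : nat) (f : Tn m) : nat := #|[set f x | x in 'I_m]|.

Definition variant_mul (m : nat) (a : Tn m) (x y : Tn m) : Tn m :=
  tmul (tmul x a) y.

(* Let A be the image of a.  On the set T + (T \ A), send x to the map
   inl j |-> inl (x (a j)),  inr i |-> inl (x i).  Composing the images of x
   and y yields the image of x a y, and x can be read back from its image
   because every point of T is either some a j or lies in T \ A.  The set
   has 2n - r elements, so relabelling it by 'I_(2n - r) gives the embedding. *)

From mathcomp Require Import all_boot zify.

Set Implicit Arguments.
Unset Strict Implicit.
Unset Printing Implicit Defensive.

Definition ffun_mul {T : finType} (f g : {ffun T -> T}) : {ffun T -> T} :=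
  [ffun t => g (f t)].

Section Relabelling.
Variables (T : finType) (m : nat).
Hypothesis cardT : #|T| = m.

Let relabel (t : T) : 'I_m := cast_ord cardT (enum_rank t).
Let unlabel (k : 'I_m) : T := enum_val (cast_ord (esym cardT) k).

Let relabelK : cancel relabel unlabel.
Proof. by move=> t; rewrite /relabel /unlabel cast_ordK enum_rankK. Qed.

Lemma ffun_mul_embedding :
  exists phi : {ffun T -> T} -> Tn m,
    injective phi /\ forall f g, phi (ffun_mul f g) = tmul (phi f) (phi g).
Proof.
exists (fun f => [ffun k => relabel (f (unlabel k))]); split.
- move=> f g /ffunP eq_fg; apply/ffunP => t.
  by have := eq_fg (relabel t); rewrite !ffunE relabelK => /(can_inj relabelK).
- by move=> f g; apply/ffunP => k; rewrite !ffunE relabelK.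
Qed.

End Relabelling.

Section VariantRepresentation.
Variables (T : finType) (a : {ffun T -> T}).

Let A : {set T} := [set a x | x in T].

Definition variant_dom := (T + {i : T | i \notin A})%type.

Definition variant_rep (x : {ffun T -> T}) : {ffun variant_dom -> variant_dom} :=
  [ffun t => match t with inl j => inl (x (a j)) | inr i => inl (x (val i)) end].

Lemma card_variant_dom : #|{: variant_dom}| = 2 * #|T| - #|A|.
Proof.
have cardAC := cardsC A.
have -> : #|{: variant_dom}| = #|T| + #|~: A|.
  by rewrite card_sum card_sig; congr (_ + _); apply: eq_card => i; rewrite !inE.
lia.
Qed.

Lemma variant_rep_inj : injective variant_rep.
Proof.
move=> x y /ffunP eq_xy; apply/ffunP => i.
have [/imsetP[j _ ->] | iNA] := boolP (i \in A).
- by have := eq_xy (inl j); rewrite !ffunE => -[].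
- by have := eq_xy (inr (exist _ i iNA)); rewrite !ffunE => -[].
Qed.

Lemma variant_repM (x y : {ffun T -> T}) :
  variant_rep (ffun_mul (ffun_mul x a) y) =
  ffun_mul (variant_rep x) (variant_rep y).
Proof. by apply/ffunP => -[j|i]; rewrite !ffunE. Qed.

End VariantRepresentation.

Theorem corollary4p1 (n : nat) (a : Tn n) :
  0 < n ->
  exists phi : Tn n -> Tn (2 * n - trank a),
    injective phi /\
    forall x y : Tn n,
      phi (variant_mul a x y) = tmul (phi x) (phi y).
Proof.
move=> _.
have cardD : #|{: variant_dom a}| = 2 * n - trank a.
  by rewrite card_variant_dom card_ord.
have [psi [psi_inj psiM]] := ffun_mul_embedding cardD.
exists (psi \o variant_rep a); split.
- exact: inj_comp psi_inj (@variant_rep_inj _ a).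
- by move=> x y; rewrite /= -psiM -variant_repM.
Qed.
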